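(* Let $G$ be a finitely generated torsion-free nilpotent group with two decompositions $\overline{G}=R_1\times\cdots\times R_m=K_1\times\cdots\times K_m$ into nontrivial rationally indecomposable rational subgroups, ordered so that for each $i$ the restriction of the projection $\alpha_i:\overline{G}\to R_i$ to $K_i$ is an isomorphism $K_i\to R_i$ with inverse the restriction to $R_i$ of the projection $\beta_i:\overline{G}\to K_i$, and $\overline{G}=R_1\times\cdots\times R_{i-1}\times K_i\times R_{i+1}\times\cdots\times R_m$. For each $i$ define $\Theta_i:\overline{G}\to\overline{G}$ by $\Theta_i(r_1r_2\cdots r_m)=r_1\cdots r_{i-1}\,\beta_i(r_i)\,r_{i+1}\cdots r_m$ for $r_j\in R_j$. Then $\Theta_i$ is a normal automorphism of $\overline{G}$.
   Context: An automorphism $\theta$ of a group $H$ is normal if $\theta(x^y)=(\theta(x))^y$ for all $x,y\in H$, where $x^y=y^{-1}xy$. Rational closure, rational subgroup and rational indecomposability: $\overline{G}$ is the Malcev completion of $G$ (torsion-free nilpotent, uniquely divisible, containing $G$, every element having a positive power in $G$); a subgroup is rational if closed under taking $n$-th roots for all $n\ge1$; rationally indecomposable means not a direct product of two nontrivial rational subgroups. *)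

From Stdlib Require Import Arith List.
Import ListNotations.

Record Group := {
  carrier :> Type;
  gmul : carrier -> carrier -> carrier;
  ginv : carrier -> carrier;
  gone : carrier;
  gmulA : forall x y z, gmul x (gmul y z) = gmul (gmul x y) z;
  gmul1l : forall x, gmul gone x = x;
  gmulVl : forall x, gmul (ginv x) x = gone
}.

Arguments gmul {g}.
Arguments ginv {g}.
Arguments gone {g}.

Section GroupDefs.
Variable T : Group.

Definition conj (x y : T) : T := gmul (ginv y) (gmul x y).
Definition comm (x y : T) : T := gmul (gmul (ginv x) (ginv y)) (gmul x y).

Fixpoint gpow (x : T) (n : nat) : T :=
  match n with 0 => gone | S k => gmul (gpow x k) x end.

Definition subgroup (H : T -> Prop) : Prop :=
  H gone /\ (forall x y, H x -> H y -> H (gmul x y)) /\ (forall x, H x -> H (ginv x)).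

Definition gen (S : T -> Prop) (x : T) : Prop :=
  forall H, subgroup H -> (forall y, S y -> H y) -> H x.

Fixpoint lcs (k : nat) : T -> Prop :=
  match k with
  | 0 => fun _ => True
  | S k' => gen (fun z => exists a b, lcs k' a /\ z = comm a b)
  end.

Definition nilpotent : Prop := exists c, forall x, lcs c x -> x = gone.

Definition torsion_free : Prop :=
  forall x n, 1 <= n -> gpow x n = gone -> x = gone.

Definition uniquely_divisible : Prop :=
  forall x n, 1 <= n -> exists y, gpow y n = x /\ forall z, gpow z n = x -> z = y.

Definition fin_gen_subgroup (G : T -> Prop) : Prop :=
  exists l : list T, forall x, G x <-> gen (fun y => In y l) x.

Definition malcev_completion_of (G : T -> Prop) : Prop :=
  torsion_free /\ nilpotent /\ uniquely_divisible /\ subgroup G /\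
  forall x, exists n, 1 <= n /\ G (gpow x n).

Definition rational (H : T -> Prop) : Prop :=
  subgroup H /\ forall x n, 1 <= n -> H (gpow x n) -> H x.

Definition nontrivial (H : T -> Prop) : Prop := exists x, H x /\ x <> gone.

Fixpoint iprod (r : nat -> T) (n : nat) : T :=
  match n with 0 => gone | S k => gmul (iprod r k) (r k) end.

Definition is_idprod (H : T -> Prop) (F : nat -> T -> Prop) (m : nat) : Prop :=
  (forall j, j < m -> subgroup (F j) /\ forall x, F j x -> H x) /\
  (forall i j x y, i < m -> j < m -> i <> j -> F i x -> F j y ->
      gmul x y = gmul y x) /\
  (forall h, H h -> exists r, (forall j, j < m -> F j (r j)) /\ h = iprod r m) /\
  (forall r s, (forall j, j < m -> F j (r j)) -> (forall j, j < m -> F j (s j)) ->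
      iprod r m = iprod s m -> forall j, j < m -> r j = s j).

Definition rationally_indecomposable (H : T -> Prop) : Prop :=
  ~ exists A B : T -> Prop,
      rational A /\ rational B /\ nontrivial A /\ nontrivial B /\
      is_idprod H (fun j => if Nat.eqb j 0 then A else B) 2.

Definition is_proj (F : nat -> T -> Prop) (m i : nat) (p : T -> T) : Prop :=
  forall r, (forall j, j < m -> F j (r j)) -> p (iprod r m) = r i.

Definition is_hom (f : T -> T) : Prop := forall x y, f (gmul x y) = gmul (f x) (f y).
Definition bijective (f : T -> T) : Prop :=
  (forall x y, f x = f y -> x = y) /\ (forall y, exists x, f x = y).
Definition automorphism (f : T -> T) : Prop := is_hom f /\ bijective f.
Definition normal_aut (f : T -> T) : Prop :=
  automorphism f /\ forall x y, f (conj x y) = conj (f x) y.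

End GroupDefs.

Arguments conj {T}. Arguments comm {T}. Arguments gpow {T}.

(* For [r] in [R_i] put [z r := r^-1 beta_i(r)].  Since [beta_i] restricts to the
   inverse of [alpha_i] on [R_i], [alpha_i (z r) = 1], so [z r] commutes with [R_i];
   and [r], [beta_i r] both commute with every [R_j], [j <> i] (for [beta_i r] by the
   exchanged decomposition).  Hence [z] is a homomorphism from [R_i] into the centre
   and [Theta_i x = x * z (alpha_i x)].  A map [x |-> x * c x] with [c] a central
   endomorphism satisfying [c o c = 1] is a normal automorphism. *)

From Stdlib Require Import Arith Lia.

Definition commute {T : Group} (x y : T) : Prop := gmul x y = gmul y x.
Definition central {T : Group} (x : T) : Prop := forall y, commute x y.

Section GroupLemmas.
Context {T : Group}.

Lemma mulgV (x : T) : gmul x (ginv x) = gone.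
Proof.
  rewrite <- (gmul1l T (gmul x (ginv x))).
  rewrite <- (gmulVl T (ginv x)) at 1.
  rewrite <- gmulA, (gmulA _ (ginv x) x), gmulVl, gmul1l. apply gmulVl.
Qed.

Lemma mulg1 (x : T) : gmul x gone = x.
Proof. rewrite <- (gmulVl T x), gmulA, mulgV. apply gmul1l. Qed.

Lemma invg_unique (a b : T) : gmul a b = gone -> ginv a = b.
Proof.
  intro H. rewrite <- (mulg1 (ginv a)), <- H, gmulA, gmulVl. apply gmul1l.
Qed.

Lemma invg1 : ginv (@gone T) = gone.
Proof. apply invg_unique, gmul1l. Qed.

Lemma invgM (x y : T) : ginv (gmul x y) = gmul (ginv y) (ginv x).
Proof.
  apply invg_unique. rewrite <- gmulA, (gmulA _ y), mulgV, gmul1l. apply mulgV.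
Qed.

Lemma mulKg (x y : T) : gmul (ginv x) (gmul x y) = y.
Proof. rewrite gmulA, gmulVl. apply gmul1l. Qed.

Lemma mulgK (x y : T) : gmul (gmul y x) (ginv x) = y.
Proof. rewrite <- gmulA, mulgV. apply mulg1. Qed.

Lemma mulgVK (x y : T) : gmul (gmul y (ginv x)) x = y.
Proof. rewrite <- gmulA, gmulVl. apply mulg1. Qed.

Lemma mulKVg (x y : T) : gmul x (gmul (ginv x) y) = y.
Proof. rewrite gmulA, mulgV. apply gmul1l. Qed.

Lemma mulIg (c x y : T) : gmul x c = gmul y c -> x = y.
Proof. intro H. rewrite <- (mulgK c x), H. apply mulgK. Qed.

Lemma hom1 (f : T -> T) : is_hom T f -> f gone = gone.
Proof.
  intro H. apply (mulIg (f gone)). rewrite <- H, !gmul1l. reflexivity.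
Qed.

Lemma homV (f : T -> T) (x : T) : is_hom T f -> f (ginv x) = ginv (f x).
Proof.
  intro H. symmetry. apply invg_unique. rewrite <- H, mulgV. apply hom1, H.
Qed.

Lemma commuteV (x y : T) : commute x y -> commute (ginv x) y.
Proof.
  unfold commute. intro H. apply (mulIg x). rewrite mulgVK, <- gmulA, <- H.
  rewrite mulKg. reflexivity.
Qed.

Lemma commuteM (x y w : T) : commute x w -> commute y w -> commute (gmul x y) w.
Proof.
  unfold commute. intros Hx Hy. rewrite <- gmulA, Hy, !gmulA, Hx. reflexivity.
Qed.

End GroupLemmas.

Section CentralTwist.
Variables (T : Group) (c f : T -> T).
Hypothesis c_hom : is_hom T c.
Hypothesis c_central : forall x, central (c x).
Hypothesis c_square_trivial : forall x, c (c x) = gone.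
Hypothesis f_twist : forall x, f x = gmul x (c x).

Lemma twist_hom : is_hom T f.
Proof.
  intros x y. rewrite !f_twist, c_hom, <- !gmulA. f_equal.
  rewrite (gmulA _ y), <- (c_central x y), gmulA. reflexivity.
Qed.

Lemma twist_injective : forall x y, f x = f y -> x = y.
Proof.
  intros x y E.
  assert (Ec : c x = c y).
  { pose proof (f_equal c E) as H. rewrite !f_twist, !c_hom, !c_square_trivial,
      !mulg1 in H. exact H. }
  rewrite !f_twist, Ec in E. exact (mulIg _ _ _ E).
Qed.

Lemma twist_surjective : forall y, exists x, f x = y.
Proof.
  intro y. exists (gmul y (ginv (c y))).
  rewrite f_twist, c_hom, (homV c _ c_hom), c_square_trivial, invg1, mulg1.
  apply mulgVK.
Qed.

Lemma twist_normal_aut : normal_aut T f.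
Proof.
  split; [split; [exact twist_hom | split; [exact twist_injective | exact twist_surjective]]|].
  intros x y. unfold conj. rewrite !f_twist, !c_hom, (homV c _ c_hom).
  (* [c (y^-1 x y) = c x] because [c y] is central *)
  rewrite (c_central x (c y)), mulKg, <- !gmulA.
  f_equal. f_equal. symmetry. apply c_central.
Qed.

End CentralTwist.

Section IteratedProducts.
Context {T : Group}.

Lemma iprod_ext (r s : nat -> T) (n : nat) :
  (forall j, j < n -> r j = s j) -> iprod T r n = iprod T s n.
Proof.
  induction n; intros H; simpl; auto.
  rewrite IHn by (intros; apply H; lia). rewrite H by lia. reflexivity.
Qed.

Lemma commute_iprod (w : T) (s : nat -> T) (n : nat) :
  (forall j, j < n -> commute w (s j)) -> commute w (iprod T s n).
Proof.
  unfold commute. induction n; intros H; simpl.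
  - rewrite gmul1l. apply mulg1.
  - rewrite gmulA, IHn by (intros; apply H; lia).
    rewrite <- !gmulA, H by lia. reflexivity.
Qed.

Lemma iprod_mul (r s : nat -> T) (n : nat) :
  (forall j k, j < n -> k < n -> j <> k -> commute (r j) (s k)) ->
  gmul (iprod T r n) (iprod T s n) = iprod T (fun j => gmul (r j) (s j)) n.
Proof.
  induction n; intros H; simpl.
  - apply gmul1l.
  - rewrite <- IHn by (intros; apply H; lia).
    rewrite <- !gmulA. f_equal. rewrite !gmulA. f_equal.
    apply commute_iprod. intros; apply H; lia.
Qed.

Lemma iprod_one (n : nat) : iprod T (fun _ => gone) n = gone.
Proof. induction n; simpl; [reflexivity | rewrite IHn; apply gmul1l]. Qed.

Lemma iprod_single (a : T) (i n : nat) :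
  i < n -> iprod T (fun j => if Nat.eqb j i then a else gone) n = a.
Proof.
  induction n as [|n IH]; intro Hi; [lia|]. simpl.
  destruct (Nat.eqb_spec n i) as [->|Hni].
  - rewrite (iprod_ext _ (fun _ => gone)), iprod_one; [apply gmul1l|].
    intros j Hj. destruct (Nat.eqb_spec j i); [lia | reflexivity].
  - rewrite IH by lia. apply mulg1.
Qed.

Lemma iprod_update (r : nat -> T) (u : T) (i n : nat) :
  i < n -> (forall j, j < n -> j <> i -> commute (r j) u) ->
  iprod T (fun j => if Nat.eqb j i then gmul (r i) u else r j) n =
  gmul (iprod T r n) u.
Proof.
  intros Hi Hu.
  set (d := fun j => if Nat.eqb j i then u else gone).
  transitivity (gmul (iprod T r n) (iprod T d n)); [| unfold d; now rewrite iprod_single].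
  rewrite iprod_mul.
  - apply iprod_ext. intros j Hj. unfold d.
    destruct (Nat.eqb_spec j i) as [->|]; [reflexivity | symmetry; apply mulg1].
  - intros j k Hj Hk Hjk. unfold d, commute.
    destruct (Nat.eqb_spec k i) as [->|].
    + apply Hu; auto.
    + rewrite mulg1. symmetry. apply gmul1l.
Qed.

End IteratedProducts.

Section Projections.
Variables (T : Group) (F : nat -> T -> Prop) (m i : nat) (p : T -> T).
Hypothesis F_dprod : is_idprod T (fun _ => True) F m.
Hypothesis i_lt_m : i < m.
Hypothesis p_proj : is_proj T F m i p.

Lemma proj_hom : is_hom T p.
Proof.
  pose proof F_dprod as [HS [HC [HE _]]]. intros x y.
  destruct (HE x I) as [r [Hr ->]]. destruct (HE y I) as [s [Hs ->]].
  rewrite iprod_mul by (intros; apply (HC j k); auto).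
  rewrite !p_proj; auto.
  intros j Hj. destruct (HS j Hj) as [[_ [Hmul _]] _]. auto.
Qed.

Lemma proj_in (x : T) : F i (p x).
Proof.
  pose proof F_dprod as [_ [_ [HE _]]].
  destruct (HE x I) as [r [Hr ->]]. rewrite p_proj; auto.
Qed.

Lemma proj_id (a : T) : F i a -> p a = a.
Proof.
  pose proof F_dprod as [HS _]. intro Ha.
  pose proof (p_proj (fun j => if Nat.eqb j i then a else gone)) as Hp.
  rewrite iprod_single, Nat.eqb_refl in Hp by exact i_lt_m. apply Hp.
  intros j Hj. destruct (Nat.eqb_spec j i) as [->|]; auto.
    apply (HS j Hj).
Qed.

Lemma proj_kernel_commute (w y : T) : p w = gone -> F i y -> commute w y.
Proof.
  pose proof F_dprod as [_ [HC [HE _]]]. intros Hw Hy.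
  destruct (HE w I) as [t [Ht ->]]. rewrite p_proj in Hw by auto.
  symmetry. apply commute_iprod. intros k Hk.
  destruct (Nat.eq_dec k i) as [->|Hki].
  - rewrite Hw. unfold commute. rewrite mulg1, gmul1l. reflexivity.
  - apply (HC i k); auto.
Qed.

End Projections.

Lemma central_of_commute_factors (T : Group) (F : nat -> T -> Prop) (m : nat) (w : T) :
  is_idprod T (fun _ => True) F m ->
  (forall j y, j < m -> F j y -> commute w y) -> central w.
Proof.
  intros [_ [_ [HE _]]] Hw y. destruct (HE y I) as [s [Hs ->]].
  apply commute_iprod. intros j Hj. apply (Hw j); auto.
Qed.

Section Exchange.
Variables (T : Group) (m i : nat) (R K : nat -> T -> Prop) (alpha beta : T -> T).
Hypothesis R_dprod : is_idprod T (fun _ => True) R m.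
Hypothesis K_dprod : is_idprod T (fun _ => True) K m.
Hypothesis i_lt_m : i < m.
Hypothesis alpha_proj : is_proj T R m i alpha.
Hypothesis beta_proj : is_proj T K m i beta.
Hypothesis beta_inverse : forall y, R i y -> K i (beta y) /\ alpha (beta y) = y.
Hypothesis exchange_dprod :
  is_idprod T (fun _ => True) (fun j => if Nat.eqb j i then K i else R j) m.
Variable Theta : T -> T.
Hypothesis Theta_def : forall r, (forall j, j < m -> R j (r j)) ->
  Theta (iprod T r m) = iprod T (fun j => if Nat.eqb j i then beta (r i) else r j) m.

Definition exchange_defect (r : T) : T := gmul (ginv r) (beta r).

Let alpha_hom : is_hom T alpha := proj_hom T R m i alpha R_dprod alpha_proj.
Let beta_hom : is_hom T beta := proj_hom T K m i beta K_dprod beta_proj.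

Lemma commute_exchanged_factor (j : nat) (k y : T) :
  j < m -> j <> i -> K i k -> R j y -> commute k y.
Proof.
  intros Hj Hji Hk Hy. pose proof exchange_dprod as [_ [HC _]].
  pose proof (HC i j k y i_lt_m Hj (fun e => Hji (eq_sym e))) as H.
  rewrite Nat.eqb_refl, (proj2 (Nat.eqb_neq j i) Hji) in H. apply H; auto.
Qed.

Lemma alpha_exchange_defect (r : T) : R i r -> alpha (exchange_defect r) = gone.
Proof.
  intro Hr. unfold exchange_defect.
  rewrite alpha_hom, homV, (proj_id T R m i alpha R_dprod i_lt_m alpha_proj r Hr)
    by exact alpha_hom.
  rewrite (proj2 (beta_inverse r Hr)). apply gmulVl.
Qed.

Lemma exchange_defect_central (r : T) : R i r -> central (exchange_defect r).
Proof.
  intro Hr. apply (central_of_commute_factors T R m _ R_dprod).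
  intros j y Hj Hy. destruct (Nat.eq_dec j i) as [->|Hji].
  - apply (proj_kernel_commute T R m i alpha); auto. apply alpha_exchange_defect, Hr.
  - pose proof R_dprod as [HS [HC _]].
    apply commuteM.
    + apply commuteV, (HC i j); auto.
    + apply (commute_exchanged_factor j); auto. apply beta_inverse, Hr.
Qed.

Lemma exchange_defectM (r s : T) : R i r -> R i s ->
  exchange_defect (gmul r s) = gmul (exchange_defect r) (exchange_defect s).
Proof.
  intros Hr Hs. unfold exchange_defect at 1. rewrite beta_hom, invgM.
  rewrite <- gmulA, (gmulA _ (ginv r)).
  change (gmul (ginv r) (beta r)) with (exchange_defect r).
  rewrite gmulA, <- (exchange_defect_central r Hr), <- gmulA. reflexivity.
Qed.

Lemma exchange_twist (x : T) : Theta x = gmul x (exchange_defect (alpha x)).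
Proof.
  pose proof R_dprod as [_ [_ [HE _]]].
  destruct (HE x I) as [r [Hr ->]].
  rewrite Theta_def, alpha_proj by exact Hr.
  rewrite <- (iprod_update r _ i m i_lt_m).
  - apply iprod_ext. intros j _. unfold exchange_defect.
    destruct (Nat.eqb j i); [symmetry; apply mulKVg | reflexivity].
  - intros j _ _. symmetry. apply exchange_defect_central, Hr, i_lt_m.
Qed.

Lemma exchange_twist_normal_aut : normal_aut T Theta.
Proof.
  set (c := fun x => exchange_defect (alpha x)).
  assert (alpha_in : forall x, R i (alpha x))
    by exact (proj_in T R m i alpha R_dprod i_lt_m alpha_proj).
  apply (twist_normal_aut T c).
  - intros x y. unfold c. rewrite alpha_hom. apply exchange_defectM; apply alpha_in.
  - intro x. apply exchange_defect_central, alpha_in.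
  - intro x. unfold c. rewrite alpha_exchange_defect by apply alpha_in.
    unfold exchange_defect. rewrite (hom1 beta beta_hom), invg1. apply gmul1l.
  - exact exchange_twist.
Qed.

End Exchange.

Theorem mainTheorem6
  (Gb : Group) (G : Gb -> Prop)
  (HG : fin_gen_subgroup Gb G)
  (Hmal : malcev_completion_of Gb G)
  (m : nat) (R K : nat -> Gb -> Prop)
  (HR : is_idprod Gb (fun _ => True) R m)
  (HK : is_idprod Gb (fun _ => True) K m)
  (HRf : forall j, j < m -> rational Gb (R j) /\ nontrivial Gb (R j) /\
                           rationally_indecomposable Gb (R j))
  (HKf : forall j, j < m -> rational Gb (K j) /\ nontrivial Gb (K j) /\
                           rationally_indecomposable Gb (K j))
  (alpha beta : nat -> Gb -> Gb)
  (Halpha : forall i, i < m -> is_proj Gb R m i (alpha i))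
  (Hbeta : forall i, i < m -> is_proj Gb K m i (beta i))
  (Hiso : forall i, i < m ->
     (forall x, K i x -> R i (alpha i x) /\ beta i (alpha i x) = x) /\
     (forall y, R i y -> K i (beta i y) /\ alpha i (beta i y) = y))
  (Hexch : forall i, i < m ->
     is_idprod Gb (fun _ => True) (fun j => if Nat.eqb j i then K i else R j) m)
  (i : nat) (Hi : i < m) (Theta : Gb -> Gb)
  (HTheta : forall r, (forall j, j < m -> R j (r j)) ->
     Theta (iprod Gb r m) =
     iprod Gb (fun j => if Nat.eqb j i then beta i (r i) else r j) m) :
  normal_aut Gb Theta.
Proof.
  (* Only the decompositions and the inverse isomorphism [beta_i : R_i -> K_i] are
     needed. *)
  apply (exchange_twist_normal_aut Gb m i R K (alpha i) (beta i)); auto.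
  apply (Hiso i Hi).
Qed.
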